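(* Let $n\ge 7$ with $3\nmid n$, $\zeta_n=e^{2\pi i/n}$, $K=\mathbb{Q}(\zeta_n)$, and let $J=\{0,1,3\}$ or $J=\{0,2,3\}$, written $J=\{j_1<j_2<j_3\}$. Let $G$ be the $3\times n$ matrix over $K$ with $G_{i,l}=\zeta_n^{j_i(l-1)}$ ($1\le i\le 3$, $1\le l\le n$). Let $P_{\mathrm{bad}}$ be the set of rational primes $p$ dividing $|N_{K/\mathbb{Q}}(\Delta)|$ for some non-zero determinant $\Delta$ of a $3\times 3$ submatrix of $G$. Let $p\notin P_{\mathrm{bad}}$ be a prime with $p\nmid n$, $\mathfrak{p}$ a prime ideal of $\mathbb{Z}[\zeta_n]$ lying above $p$, $\rho:\mathbb{Z}[\zeta_n]\to\mathbb{Z}[\zeta_n]/\mathfrak{p}\cong\mathbb{F}_{p^f}$ the reduction map ($f$ the multiplicative order of $p$ modulo $n$), and $\overline{G}=\rho(G)$. Then the code generated by $\overline{G}$ is a cyclic MDS code of length $n$ and dimension $3$ over $\mathbb{F}_{p^f}$ that is of non-RS type.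
   Context: A linear $[n,k]$ code is MDS if its minimum distance is $n-k+1$; cyclic means invariant under cyclic shift of coordinates. A code is of RS type if it is equivalent (change of generator matrix, column permutation, non-zero column scaling) to a generalized Reed–Solomon code with generator matrix $(v_j x_j^{i-1})$, $x_j$ distinct, $v_j\neq 0$; otherwise it is of non-RS type. $N_{K/\mathbb{Q}}$ is the field norm. *)

From HB Require Import structures.
From mathcomp Require Import all_boot all_order all_algebra all_fingroup all_field.
Set Implicit Arguments. Unset Strict Implicit. Unset Printing Implicit Defensive.
Import Order.TTheory GRing.Theory Num.Theory.
Local Open Scope ring_scope.

(* The code generated by C : 'M[F]_(k,n) is its row space; codewords are the    *)

Definition wt (F : fieldType) (n : nat) (x : 'rV[F]_n) : nat :=
  #|[set i : 'I_n | x 0 i != 0]|.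

Definition min_dist_is (F : fieldType) (k n : nat) (C : 'M[F]_(k, n)) (d : nat) : Prop :=
  (exists x : 'rV[F]_n, (x <= C)%MS /\ x != 0 /\ wt x = d) /\
  (forall x : 'rV[F]_n, (x <= C)%MS -> x != 0 -> (d <= wt x)%N).

Definition is_MDS (F : fieldType) (k n : nat) (C : 'M[F]_(k, n)) : Prop :=
  min_dist_is C (n - \rank C + 1).

Definition cshift (F : fieldType) (n : nat) (x : 'rV[F]_n) : 'rV[F]_n :=
  \row_(i < n) x 0 (ord_pred i).

Definition is_cyclic_code (F : fieldType) (k n : nat) (C : 'M[F]_(k, n)) : Prop :=
  forall x : 'rV[F]_n, (x <= C)%MS -> (cshift x <= C)%MS.

Definition GRSmx (F : fieldType) (k n : nat) (x v : 'I_n -> F) : 'M[F]_(k, n) :=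
  \matrix_(i < k, j < n) (v j * x j ^+ i).

Definition RS_type (F : fieldType) (k n : nat) (C : 'M[F]_(k, n)) : Prop :=
  exists (s : 'S_n) (a x v : 'I_n -> F),
    (forall j, a j != 0) /\ injective x /\ (forall j, v j != 0) /\
    (((\matrix_(i < k, j < n) (a j * C i (s j)))%R : 'M[F]_(k, n)) == GRSmx (\rank C) x v)%MS.

(* G_{i,l} = z^(j_i * l), rows i < 3, columns l < n (0-indexed, so l = l'-1). *)
Definition Gmat (R : pzRingType) (n : nat) (J : seq nat) (z : R) : 'M[R]_(3, n) :=
  \matrix_(i < 3, l < n) z ^+ (nth 0%N J i * l).

Definition minorG (R : comPzRingType) (n : nat) (J : seq nat) (z : R)
  (c : 'I_3 -> 'I_n) : R := \det (colsub c (Gmat n J z)).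

(* Field norm N_{K/Q} of the minor, K = Q(z), z a primitive n-th root of unity:
   the product of its Galois conjugates sigma_k (z |-> z^k, k coprime to n). *)
Definition normMinor (n : nat) (J : seq nat) (z : algC) (c : 'I_3 -> 'I_n) : algC :=
  \prod_(k < n | coprime k n) minorG J (z ^+ k) c.

Definition P_bad (n : nat) (J : seq nat) (z : algC) (p : nat) : Prop :=
  exists c : 'I_3 -> 'I_n, minorG J z c != 0 /\
    exists m : int, normMinor J z c = m%:~R /\ (p %| absz m)%N.

From HB Require Import structures.
From mathcomp Require Import all_boot all_order all_algebra all_fingroup all_field.
From mathcomp Require Import ring zify.
Import Order.TTheory GRing.Theory Num.Theory.
Set Implicit Arguments. Unset Strict Implicit. Unset Printing Implicit Defensive.
Local Open Scope ring_scope.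

(* Every 3x3 minor of G is a generalized Vandermonde determinant: the Vandermonde
   product of three distinct n-th roots of unity a, b, d times e1 = a + b + d
   (J = {0,1,3}) or e2 = ab + bd + da (J = {0,2,3}).  Over C these do not vanish
   when 3 does not divide n: e2 is abd times the conjugate of e1, and e1 = e2 = 0
   would make a, b, d roots of X^3 - abd, hence equal.  The norm of the minor is
   the constant remainder m of an integer polynomial modulo Phi_n, so its
   reduction at w vanishes only if p divides m, i.e. only if p is in P_bad.
   Hence all 3x3 minors of the reduced matrix are units, so the code has
   dimension 3 and is MDS, and w is a primitive n-th root of unity.  Finally,
   componentwise products of codewords of a 3-dimensional GRS code span at most
   5 dimensions, while for our code they contain the six Vandermonde rows with
   the distinct exponents j_a + j_b. *)

Lemma det_mx33 (R : comPzRingType) (A : 'M[R]_3) : \det A =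
  A 0 0 * (A 1 1 * A 2 2 - A 1 2 * A 2 1) - A 0 1 * (A 1 0 * A 2 2 - A 1 2 * A 2 0)
  + A 0 2 * (A 1 0 * A 2 1 - A 1 1 * A 2 0).
Proof.
rewrite (expand_det_row _ 0) !big_ord_recl big_ord0 /cofactor.
rewrite !(expand_det_row _ 0) !big_ord_recl !big_ord0 /cofactor !det_mx11 !mxE.
(* reindex through nat to normalise the lifted ordinals of the expansion *)
pose a (i j : nat) := A (inord i) (inord j).
have aE i j : A i j = a i j by rewrite /a !inord_val.
by rewrite !aE /=; ring.
Qed.

(* The Schur polynomial s_(1) = e1 or s_(1,1) = e2 of the exponent set J. *)
Definition schurJ (R : pzRingType) (J : seq nat) (a b d : R) : R :=
  if J == [:: 0; 1; 3]%N then a + b + d else a * b + b * d + d * a.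

Lemma minorG_factor (R : comPzRingType) n J (x : R) (c : 'I_3 -> 'I_n) :
  J = [:: 0; 1; 3]%N \/ J = [:: 0; 2; 3]%N ->
  minorG J x c = (x ^+ c 1 - x ^+ c 0) * (x ^+ c 2 - x ^+ c 0) * (x ^+ c 2 - x ^+ c 1)
                 * schurJ J (x ^+ c 0) (x ^+ c 1) (x ^+ c 2).
Proof.
rewrite /minorG det_mx33 !mxE /schurJ.
by case=> -> /=; rewrite !mul0n ?mul1n !expr0 ?(mulnC 2) ?(mulnC 3) !exprM; ring.
Qed.

Lemma rmorph_minorG (R S : comNzRingType) (f : {rmorphism R -> S}) n J (x : R)
    (c : 'I_3 -> 'I_n) :
  f (minorG J x c) = minorG J (f x) c.
Proof.
rewrite /minorG -det_map_mx; congr (\det _); apply/matrixP => i j.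
by rewrite !mxE rmorphXn.
Qed.

Lemma unity_root_coprime_eq1 (R : pzRingType) (x : R) m n :
  (0 < m)%N -> coprime m n -> x ^+ m = 1 -> x ^+ n = 1 -> x = 1.
Proof.
move=> m_gt0 /eqP co xm xn; have [km kn] := egcdnP n m_gt0; rewrite co => def _.
have : x ^+ (km * m) = x ^+ (kn * n + 1) by rewrite def.
by rewrite exprD expr1 (mulnC km) (mulnC kn) !exprM xm xn !expr1n mul1r.
Qed.

Lemma conjC_unity_root (C : numClosedFieldType) (a : C) n :
  (0 < n)%N -> a ^+ n = 1 -> a^* = a^-1.
Proof.
move=> n_gt0 an; have /eqP norm_a : `|a| == 1.
  by rewrite -(pexpr_eq1 n_gt0) // -normrX an normr1.
by rewrite invC_norm norm_a expr1n invr1 mul1r.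
Qed.

Section SchurUnityRoots.

Variables (n : nat) (a b d : algC).
Hypotheses (n_3 : ~~ (3 %| n)%N) (an : a ^+ n = 1) (bn : b ^+ n = 1) (dn : d ^+ n = 1).

Let n_gt0 : (0 < n)%N. Proof. by move: n_3; case: (n). Qed.

Let unity_neq0 (x : algC) : x ^+ n = 1 -> x != 0.
Proof.
by move=> xn; apply: contra_eq_neq xn => ->; rewrite expr0n gtn_eqF // eq_sym oner_neq0.
Qed.

Let cube_inj (x y : algC) : x ^+ n = 1 -> y ^+ n = 1 -> x ^+ 3 = y ^+ 3 -> x = y.
Proof.
move=> xn yn xy3; have y0 := unity_neq0 yn.
suff : x / y = 1 by move/divr1_eq.
apply: (@unity_root_coprime_eq1 _ _ 3 n) => //; first by rewrite prime_coprime.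
- by rewrite exprMn xy3 exprVn divff // expf_neq0.
- by rewrite exprMn xn exprVn yn invr1 mulr1.
Qed.

Let e1 := a + b + d.
Let e2 := a * b + b * d + d * a.

Let e1_e2_neq0 : e1 = 0 -> e2 = 0 -> False.
Proof.
move=> e1_0 e2_0.
(* (X - a)(X - b)(X - d) = X^3 - e1 X^2 + e2 X - abd *)
have cube x : x = a \/ x = b \/ x = d -> x ^+ 3 = a * b * d.
  move=> x_abd; apply/eqP; rewrite -subr_eq0.
  have -> : x ^+ 3 - a * b * d = x ^+ 2 * e1 - x * e2 + (x - a) * (x - b) * (x - d).
    by rewrite /e1 /e2; ring.
  by rewrite e1_0 e2_0 !mulr0 subrr add0r; case: x_abd => [->|[->|->]];
    rewrite !subrr ?mulr0 ?mul0r.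
have ab : a = b by apply: cube_inj; rewrite // !cube; auto.
have ad : a = d by apply: cube_inj; rewrite // !cube; auto.
move: e1_0; rewrite /e1 -ab -ad; have -> : a + a + a = a * 3%:R by ring.
by move/eqP; rewrite mulf_eq0 (negbTE (unity_neq0 an)) pnatr_eq0.
Qed.

Let e2_conj : e2 = a * b * d * e1^*.
Proof.
rewrite /e1 /e2 !rmorphD /= !(conjC_unity_root n_gt0) //.
by field; rewrite !unity_neq0.
Qed.

Let e1_conj : e1 = a * b * d * e2^*.
Proof.
rewrite /e1 /e2 !rmorphD !rmorphM /= !(conjC_unity_root n_gt0) //.
by field; rewrite !unity_neq0.
Qed.

Lemma schurJ_unity_neq0 J : schurJ J a b d != 0.
Proof.
rewrite /schurJ; case: ifP => _; apply/eqP => e0.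
- by apply: (e1_e2_neq0 e0); rewrite e2_conj /e1 e0 rmorph0 mulr0.
- by apply: (e1_e2_neq0 _ e0); rewrite e1_conj /e2 e0 rmorph0 mulr0.
Qed.

End SchurUnityRoots.

Lemma minorG_algC_neq0 n J (z : algC) (c : 'I_3 -> 'I_n) :
  J = [:: 0; 1; 3]%N \/ J = [:: 0; 2; 3]%N -> ~~ (3 %| n)%N ->
  n.-primitive_root z -> injective c -> minorG J z c != 0.
Proof.
move=> HJ n_3 z_prim c_inj; rewrite (minorG_factor _ _ HJ).
have zn k : (z ^+ k) ^+ n = 1 by rewrite exprAC (prim_expr_order z_prim) expr1n.
have z_inj i j : i != j -> z ^+ c i != z ^+ c j.
  move=> ij; rewrite (eq_prim_root_expr z_prim) !modn_small //.
  by apply: contra ij => /eqP /val_inj /c_inj ->.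
rewrite !mulf_neq0 ?subr_eq0 ?z_inj //.
exact: schurJ_unity_neq0 n_3 (zn _) (zn _) (zn _) J.
Qed.

Lemma Cyclotomic_root_unity (R : comNzRingType) n (x : R) :
  (0 < n)%N -> root (map_poly intr 'Phi_n) x -> x ^+ n = 1.
Proof.
move=> n_gt0 /eqP Phi_x; apply/eqP; rewrite -subr_eq0.
have := congr1 (fun q => (map_poly intr q).[x]) (prod_Cyclotomic n_gt0).
rewrite rmorph_prod horner_prod (big_rem n) /=; last by rewrite -dvdn_divisors.
rewrite [X in X * _]Phi_x mul0r.
by rewrite rmorphB rmorph1 /= map_polyXn hornerD hornerN hornerXn hornerC => <-.
Qed.

Lemma horner_modp_Cyclotomic (R : comNzRingType) n (q : {poly int}) (x : R) :
  root (map_poly intr 'Phi_n) x ->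
  (map_poly intr q).[x] = (map_poly intr (q %% 'Phi_n)).[x].
Proof.
move=> /eqP Phi_x; rewrite {1}(Pdiv.IdomainMonic.divp_eq (Cyclotomic_monic n) q).
by rewrite rmorphD rmorphM hornerD hornerM Phi_x mulr0 add0r.
Qed.

Lemma modp_Cyclotomic_const n (z : algC) (q : {poly int}) :
  n.-primitive_root z ->
  (forall k : 'I_n, coprime k n -> (map_poly intr q).[z ^+ k] = (map_poly intr q).[z]) ->
  q %% 'Phi_n = ((q %% 'Phi_n)`_0)%:P.
Proof.
move=> z_prim q_conj; set r := q %% 'Phi_n; set N := (map_poly intr q).[z].
have root_Phi k : coprime k n -> root (map_poly intr 'Phi_n) (z ^+ k).
  move=> co; rewrite (Cintr_Cyclotomic z_prim) (root_cyclotomic z_prim).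
  by rewrite prim_root_exp_coprime.
have r_conj (k : 'I_n) : coprime k n -> (map_poly intr r).[z ^+ k] = N.
  by move=> co; rewrite /r -horner_modp_Cyclotomic ?q_conj ?root_Phi.
(* r - N has the totient n roots z^k but is of smaller degree than 'Phi_n *)
have rN : map_poly intr r = N%:P.
  apply/eqP; rewrite -subr_eq0; apply/eqP.
  pose rs := [seq z ^+ k | k : 'I_n in [pred k : 'I_n | coprime k n]].
  apply: (@roots_geq_poly_eq0 _ _ rs).
  - by apply/allP => _ /imageP[k co ->]; rewrite rootE !hornerE r_conj // subrr.
  - rewrite map_inj_uniq ?enum_uniq // => i j /eqP.
    by rewrite (eq_prim_root_expr z_prim) !modn_small // => /eqP /val_inj.
  have -> : size rs = totient n.
    apply/eqP; rewrite -eqSS -(size_prod_XsubC _ id) big_image.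
    by rewrite -(size_cyclotomic z n).
  apply: leq_trans (size_polyD _ _) _; rewrite size_polyN geq_max; apply/andP; split.
    rewrite size_map_inj_poly ?rmorph0 //; last exact: intr_inj.
    by rewrite -ltnS -(size_Cyclotomic n) ltn_modp monic_neq0 // Cyclotomic_monic.
  by apply: leq_trans (size_polyC_leq1 _) _; rewrite totient_gt0 (prim_order_gt0 z_prim).
apply: (map_inj_poly (@intr_inj algC) (rmorph0 _)).
by rewrite map_polyC rN -coef_map rN coefC.
Qed.

Section NormPoly.

Variables (n : nat) (J : seq nat) (c : 'I_3 -> 'I_n).

Definition normPoly : {poly int} := \prod_(k < n | coprime k n) minorG J ('X ^+ k) c.

Lemma horner_normPoly (R : comNzRingType) (x : R) :
  (map_poly intr normPoly).[x] = \prod_(k < n | coprime k n) minorG J (x ^+ k) c.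
Proof.
rewrite rmorph_prod horner_prod; apply: eq_bigr => k _.
by rewrite -horner_evalE !rmorph_minorG /= map_polyXn horner_evalE hornerXn.
Qed.

Lemma horner_normPoly_prim (z : algC) (k : 'I_n) :
  n.-primitive_root z -> coprime k n -> (map_poly intr normPoly).[z ^+ k] = normMinor J z c.
Proof.
move=> z_prim co; rewrite horner_normPoly /normMinor.
have n_gt0 := prim_order_gt0 z_prim.
pose mulk e (i : 'I_n) := Ordinal (ltn_pmod (i * e) n_gt0).
(* the Galois conjugation z |-> z^k permutes the primitive roots *)
have mulk_inj : injective (mulk k).
  apply: can_inj (mulk (egcdn k n).1) _ => i; apply: val_inj => /=.
  rewrite modnMml -mulnA -modnMmr -{1}(mul1n k).
  by rewrite (chinese_modr co 0) modnMmr muln1 modn_small.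
rewrite [RHS](reindex_inj mulk_inj); apply: eq_big => i /=.
  by rewrite coprime_modl coprimeMl co andbT.
by move=> _; rewrite (prim_expr_mod z_prim) mulnC exprM.
Qed.

End NormPoly.

Lemma minorG_reduction_neq0 n J (z : algC) p (F : fieldType) (w : F)
    (c : 'I_3 -> 'I_n) :
  (1 < n)%N -> n.-primitive_root z -> minorG J z c != 0 -> ~ P_bad n J z p ->
  p \in [pchar F] -> root (map_poly intr 'Phi_n) w -> minorG J w c != 0.
Proof.
move=> n_gt1 z_prim Mz notPbad pF Phi_w.
pose k1 : 'I_n := Ordinal n_gt1.
have z_norm (k : 'I_n) : coprime k n ->
    (map_poly intr (normPoly J c)).[z ^+ k] = (map_poly intr (normPoly J c)).[z].
  by move=> co; rewrite -[z in RHS]expr1 -[1%N]/(val k1) !horner_normPoly_prim ?coprime1n.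
have const := modp_Cyclotomic_const z_prim z_norm.
set m := _`_0 in const.
have horner_m (R : comNzRingType) (x : R) : root (map_poly intr 'Phi_n) x ->
    (map_poly intr (normPoly J c)).[x] = m%:~R.
  by move=> Phi_x; rewrite (horner_modp_Cyclotomic _ Phi_x) const map_polyC hornerC.
apply/eqP => Mw; apply: notPbad; exists c; split => //; exists m; split.
  rewrite -(horner_m _ z); last first.
    by rewrite (Cintr_Cyclotomic z_prim) (root_cyclotomic z_prim).
  by rewrite -(horner_normPoly_prim _ _ (k := k1) z_prim) ?coprime1n // expr1.
have := dvdz_pcharf pF m; rewrite -(horner_m _ w) // horner_normPoly.
by rewrite (bigD1 k1) ?coprime1n //= expr1 Mw mul0r eqxx.
Qed.

Lemma mxrank_colsub (F : fieldType) m n k (c : 'I_k -> 'I_n) (A : 'M[F]_(m, n)) :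
  (\rank (colsub c A) <= \rank A)%N.
Proof. by rewrite -[A in colsub _ A]mulmx1 -mulmx_colsub mxrankM_maxl. Qed.

Lemma wt_add_zeros (F : fieldType) n (x : 'rV[F]_n) :
  (wt x + #|[set i | x 0%R i == 0%R]|)%N = n.
Proof.
rewrite addnC -[RHS]card_ord -(cardsC [set i | x 0 i == 0]); congr (_ + _)%N.
by apply: eq_card => i; rewrite !inE.
Qed.

Section MaximalMinors.

Variables (F : fieldType) (k n : nat) (G : 'M[F]_(k, n)).
Hypothesis k_le_n : (k <= n)%N.
Hypothesis minors_unit : forall c : 'I_k -> 'I_n, injective c -> colsub c G \in unitmx.

Lemma codeword_eq0 (v : 'rV[F]_k) (c : 'I_k -> 'I_n) :
  injective c -> (forall j, (v *m G) 0 (c j) = 0) -> v = 0.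
Proof.
move=> c_inj vG_c; have : v *m colsub c G = 0.
  by rewrite mulmx_colsub; apply/rowP => j; rewrite [LHS]mxE vG_c mxE.
by move/(congr1 (mulmx^~ (invmx (colsub c G)))); rewrite mulmxK ?minors_unit // mul0mx.
Qed.

Let widen_inj : injective (widen_ord k_le_n).
Proof. by move=> i j /(congr1 val) /= /val_inj. Qed.

Lemma mxrank_minors_unit : \rank G = k.
Proof.
apply/eqP; rewrite eqn_leq rank_leq_row /=.
by rewrite -{1}(mxrank_unit (minors_unit widen_inj)) mxrank_colsub.
Qed.

Lemma wt_minors_unit (x : 'rV[F]_n) : (x <= G)%MS -> x != 0 -> (n - k + 1 <= wt x)%N.
Proof.
case/submxP => v ->{x} vG_neq0; rewrite leqNgt; apply/negP => wt_lt.
have kZ : (k <= #|[set i | (v *m G) 0%R i == 0%R]|)%N.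
  by rewrite -(leq_add2l (wt (v *m G))) wt_add_zeros; lia.
pose c j := enum_val (widen_ord kZ j).
have c_inj : injective c by move=> i j /enum_val_inj /(congr1 val) /= /val_inj.
have vG_c j : (v *m G) 0 (c j) = 0.
  by apply/eqP; have := enum_valP (widen_ord kZ j); rewrite inE.
by move: vG_neq0; rewrite (codeword_eq0 c_inj vG_c) mul0mx eqxx.
Qed.

Lemma is_MDS_minors_unit : (0 < k)%N -> is_MDS G.
Proof.
move=> k_gt0; rewrite /is_MDS mxrank_minors_unit; split; last exact: wt_minors_unit.
pose c := widen_ord k_le_n; pose j0 := Ordinal k_gt0.
pose x := (delta_mx 0 j0 : 'rV[F]_k) *m invmx (colsub c G) *m G.
have x_c j : x 0 (c j) = (j == j0)%:R.
  have : colsub c x = delta_mx 0 j0 by rewrite -mulmx_colsub mulmxKV ?minors_unit.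
  by move/matrixP/(_ 0 j); rewrite !mxE eqxx.
have x_neq0 : x != 0.
  by apply/eqP => x0; move: (x_c j0); rewrite x0 mxE eqxx => /eqP; rewrite eq_sym oner_eq0.
exists x; split; [exact: submxMl | split => //].
apply/eqP; rewrite eqn_leq wt_minors_unit ?submxMl //= andbT.
have zeros : c @: [set~ j0] \subset [set i | x 0 i == 0].
  by apply/subsetP => i /imsetP[j]; rewrite !inE => jj0 ->; rewrite x_c (negPf jj0).
have := subset_leq_card zeros; rewrite card_imset // cardsC1 card_ord.
by rewrite -(leq_add2l (wt x)) wt_add_zeros; lia.
Qed.

End MaximalMinors.

Lemma schur_GRSmx (F : fieldType) k n (x v : 'I_n -> F) (u u' : 'rV[F]_n) :
  (u <= GRSmx k.+1 x v)%MS -> (u' <= GRSmx k.+1 x v)%MS ->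
  ((\row_j (u 0 j * u' 0 j))%R <= GRSmx (k + k).+1 x (fun j => v j ^+ 2))%MS.
Proof.
move=> /submxP[r ->] /submxP[r' ->].
have -> : \row_j ((r *m GRSmx k.+1 x v) 0 j * (r' *m GRSmx k.+1 x v) 0 j) =
    \sum_(e < k.+1) \sum_(e' < k.+1) (r 0 e * r' 0 e') *:
      row (inord (e + e')) (GRSmx (k + k).+1 x (fun j => v j ^+ 2)).
  apply/rowP => j; rewrite !mxE summxE big_distrlr /=.
  apply: eq_bigr => e _; rewrite summxE; apply: eq_bigr => e' _.
  rewrite !mxE inordK; last by have := ltn_ord e; have := ltn_ord e'; lia.
  by rewrite exprD; ring.
by apply: summx_sub => e _; apply: summx_sub => e' _; apply/scalemx_sub/row_sub.
Qed.

Lemma cyclic_Gmat (F : fieldType) n J (w : F) : w ^+ n = 1 -> is_cyclic_code (Gmat n J w).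
Proof.
move=> wn x /submxP[v ->]; apply/submxP.
exists (\row_i (v 0 i * w ^+ (nth 0%N J i * (n - 1)))).
apply/rowP => l; rewrite /cshift !mxE; apply: eq_bigr => i _.
rewrite !mxE -mulrA -exprD; congr (_ * _); set a := nth 0%N J i.
rewrite -(expr_mod (a * ord_pred l) wn) -(expr_mod (a * (n - 1) + a * l) wn).
congr (_ ^+ _); rewrite /= modnMmr -mulnDr; congr (_ * _ %% _)%N.
by have := ltn_ord l; lia.
Qed.

Lemma prim_root_minorG (F : fieldType) n J (w : F) :
  (3 <= n)%N -> J = [:: 0; 1; 3]%N \/ J = [:: 0; 2; 3]%N -> w ^+ n = 1 ->
  (forall c : 'I_3 -> 'I_n, injective c -> minorG J w c != 0) ->
  n.-primitive_root w.
Proof.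
move=> n_ge3 HJ wn minors_neq0.
(* if w^k = 1, the minor on the columns 0, k, k' has the factor w^k - w^0 = 0 *)
have wk_neq1 (k : 'I_n) : (0 < k)%N -> w ^+ k != 1.
  move=> k_gt0; have n_gt0 : (0 < n)%N by lia.
  have k'_lt : ((if k == 1%N :> nat then 2 else 1) < n)%N by case: ifP; lia.
  pose o : 'I_n := Ordinal n_gt0; pose k' : 'I_n := Ordinal k'_lt.
  have /tuple_uniqP c_inj : uniq [tuple o; k; k'].
    by rewrite /= !inE -!val_eqE /=; case: ifP => /eqP; lia.
  apply: contra (minors_neq0 _ c_inj) => /eqP wk1.
  by rewrite (minorG_factor _ _ HJ) /= expr0 wk1 subrr !mul0r.
apply/andP; split; first lia.
apply/forallP => i; rewrite unity_rootE; case: (ltngtP i.+1 n) => [i_lt||->].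
- by rewrite (negPf (wk_neq1 (Ordinal i_lt) _)) // eq_sym ltn_eqF.
- by rewrite ltnNge ltn_ord.
- by rewrite wn !eqxx.
Qed.

Lemma not_RS_type_Gmat (F : fieldType) n J (w : F) :
  (7 <= n)%N -> J = [:: 0; 1; 3]%N \/ J = [:: 0; 2; 3]%N -> n.-primitive_root w ->
  \rank (Gmat n J w) = 3%N -> ~ RS_type (Gmat n J w).
Proof.
move=> n_ge7 HJ w_prim rankG [s [a [x [v [a_neq0 [_ [_ /andP[C_sub _]]]]]]]].
rewrite rankG in C_sub; set C := \matrix_(i, j) _ in C_sub.
(* (e1 q, e2 q) runs over the six pairs of row indices a <= b *)
pose e1 (q : 'I_6) : 'I_3 := nth 0 [:: 0; 0; 0; 1; 1; 2] q.
pose e2 (q : 'I_6) : 'I_3 := nth 0 [:: 0; 1; 2; 1; 2; 2] q.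
pose U : 'M[F]_(6, n) := \matrix_(q, j) (C (e1 q) j * C (e2 q) j).
have U_sub : (U <= GRSmx 5 x (fun j => v j ^+ 2))%MS.
  apply/row_subP => q.
  have -> : row q U = \row_j (row (e1 q) C 0 j * row (e2 q) C 0 j).
    by apply/rowP => j; rewrite !mxE.
  by apply: (@schur_GRSmx _ 2); apply: submx_trans (row_sub _ _) C_sub.
pose E q := (nth 0 J (e1 q) + nth 0 J (e2 q))%N.
have E_neq (i j : 'I_6) : i != j -> E i != E j.
  by rewrite /E; case: HJ => ->;
    case: i j => [[|[|[|[|[|[|i]]]]]] ?] [[|[|[|[|[|[|j]]]]]] ?].
have E_lt q : (E q < n)%N.
  apply: leq_trans n_ge7; rewrite /E.
  by case: HJ => ->; case: q => [[|[|[|[|[|[|q]]]]]] ?].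
have n_ge6 : (6 <= n)%N by lia.
pose g (l : 'I_6) : 'I_n := (s^-1)%g (widen_ord n_ge6 l).
have Ug : colsub g U =
    (Vandermonde 6 (\row_q w ^+ E q))^T *m diag_mx (\row_l a (g l) ^+ 2).
  apply/matrixP => q l; rewrite mul_mx_diag !mxE /g permKV /=.
  by rewrite -!exprM /E mulnDl exprD; ring.
have Ug_unit : colsub g U \in unitmx.
  rewrite unitmxE unitfE Ug det_mulmx det_tr det_Vandermonde det_diag.
  apply: mulf_neq0; apply/prodf_neq0 => i _; last by rewrite mxE expf_neq0.
  apply/prodf_neq0 => j ij; rewrite !mxE subr_eq0 (eq_prim_root_expr w_prim).
  by rewrite !modn_small // eq_sym E_neq // neq_ltn ij.
have := leq_trans (mxrankS U_sub) (rank_leq_row _).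
by have := mxrank_colsub g U; rewrite (mxrank_unit Ug_unit); lia.
Qed.

Theorem mainTheorem6 (n : nat) (J : seq nat) (z : algC) (p : nat)
    (F : finFieldType) (w : F) :
  (7 <= n)%N -> ~~ (3 %| n)%N ->
  (J = [:: 0; 1; 3]%N \/ J = [:: 0; 2; 3]%N) ->
  n.-primitive_root z ->
  prime p -> ~ P_bad n J z p -> ~~ (p %| n)%N ->
  (* reduction rho : Z[z] -> F = Z[z]/pp, a surjective ring morphism with
     p in its kernel; rho(z) = w *)
  p \in [pchar F] ->
  root (map_poly intr 'Phi_n) w ->
  (forall y : F, exists q : {poly int}, y = (map_poly intr q).[w]) ->
  is_cyclic_code (Gmat n J w) /\ \rank (Gmat n J w) = 3%N /\
  is_MDS (Gmat n J w) /\ ~ RS_type (Gmat n J w).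
Proof.
move=> n_ge7 n_3 HJ z_prim _ notPbad _ pF Phi_w _.
have n_ge3 : (3 <= n)%N by lia.
have n_gt1 : (1 < n)%N by lia.
have minors_w (c : 'I_3 -> 'I_n) : injective c -> minorG J w c != 0.
  move=> c_inj; apply: (minorG_reduction_neq0 n_gt1 z_prim _ notPbad pF Phi_w).
  exact: minorG_algC_neq0.
have wn := Cyclotomic_root_unity (ltnW n_gt1) Phi_w.
have w_prim := prim_root_minorG n_ge3 HJ wn minors_w.
have minors_unit (c : 'I_3 -> 'I_n) : injective c -> colsub c (Gmat n J w) \in unitmx.
  by move=> /minors_w; rewrite unitmxE unitfE.
have rankG := mxrank_minors_unit n_ge3 minors_unit.
split; first exact: cyclic_Gmat.
split; first exact: rankG.
split; first exact: is_MDS_minors_unit.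
exact: not_RS_type_Gmat.
Qed.
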